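(* Let $G=(V,E)$ be a finite simple undirected graph and let $\sigma=(\lambda_1,\lambda_2,\ldots,\lambda_m)$ be a coding sequence of $G$. Write $V=\{v_1,\ldots,v_m\}$, where $v_i$ corresponds to $\lambda_i$, and put $\mu(v_i)=\lambda_i$. Let $\{p_1,\ldots,p_k\}$ be the set of all distinct prime factors of $\lambda(\sigma)$, and suppose $G$ has $s\ge 0$ isolated vertices (so that $\lambda_1=\cdots=\lambda_s=1$ correspond to the isolated vertices $v_1,\ldots,v_s$). Define $S_j=\{v_j\}$ for $j=1,\ldots,s$ and $S_{s+j}=\{v_i\in V : p_j \text{ divides } \lambda_i\}$ for $j=1,\ldots,k$. Then $S=\{S_j : j=1,\ldots,s+k\}$ is a total clique covering of $G$. Moreover, for any vertex $v$ and any nonempty set $\{j_1,\ldots,j_r\}\subseteq\{1,\ldots,k\}$, we have $v\in S_{s+j_1}\cap\cdots\cap S_{s+j_r}$ and $v\notin S_{s+j}$ for all $j\in\{1,\ldots,k\}\setminus\{j_1,\ldots,j_r\}$ if and only if $\mu(v)=p_{j_1}p_{j_2}\cdots p_{j_r}$; and $v\in S_1\cup\cdots\cup S_s$ if and only if $\mu(v)=1$.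
   Context: All graphs are finite, simple and undirected. For a finite sequence $\sigma=(a_1,\ldots,a_m)$ of positive integers, $G[\sigma]$ is the graph with vertices $v_1,\ldots,v_m$ ($a_i$ is the label of $v_i$) where $v_iv_j$ is an edge iff $i\ne j$ and $\gcd(a_i,a_j)>1$. A coding sequence of a graph $G$ with $s\ge 0$ isolated vertices is defined as follows: if $G$ has a single vertex, $\sigma=(1)$; otherwise let $G_1$ be $G$ with its isolated vertices deleted, let $\sigma_1$ be a finite non-decreasing sequence of square-free integers greater than $1$ with $G_1\cong G[\sigma_1]$, and let $\sigma$ be $\sigma_1$ prefixed by $s$ entries equal to $1$; then $G\cong G[\sigma]$, the vertex with label $1$ being the isolated vertices. Entries greater than $1$ are non-trivial, and $\lambda(\sigma)$ denotes the least common multiple of the non-trivial entries of $\sigma$. A clique is a set of pairwise adjacent vertices. A set $S$ of cliques of $G$ is a total clique covering of $G$ if every vertex lies in some member of $S$ and every edge has both endpoints in some member of $S$. *)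

From mathcomp Require Import all_boot.
Set Implicit Arguments. Unset Strict Implicit. Unset Printing Implicit Defensive.

Definition squarefree (n : nat) : bool := all (fun p => logn p n <= 1) (primes n).

Definition isolated (T : finType) (e : rel T) (x : T) : bool := [forall y, ~~ e x y].

Definition graph_of_seq (m : nat) (sigma : seq nat) : rel 'I_m :=
  fun i j => (i != j) && (1 < gcdn (nth 0 sigma i) (nth 0 sigma j)).

(* sigma is a coding sequence of the graph (T,e), where v i is the vertex
   carrying label sigma_i (0-based indices). *)
Definition coding_seq (T : finType) (e : rel T) (m : nat) (v : 'I_m -> T)
    (sigma : seq nat) : Prop :=
  let s := #|[set x | isolated e x]| in
  [/\ size sigma = m /\ bijective v,
      (forall i j : 'I_m, e (v i) (v j) = graph_of_seq sigma i j),
      (forall i : 'I_m, i < s -> nth 0 sigma i = 1),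
      (forall i : 'I_m, s <= i -> 1 < nth 0 sigma i /\ squarefree (nth 0 sigma i)) &
      sorted leq (drop s sigma)].

Definition lambda (sigma : seq nat) : nat := \big[lcmn/1]_(x <- sigma | 1 < x) x.

(* The family S_j (0-based): for j < s, S_j = {v_j}; for j = s + t (t < k),
   S_j = {v_i : p_t | sigma_i}, where p_0 < ... < p_(k-1) are the primes of lambda. *)
Definition Sfam (T : finType) (m : nat) (v : 'I_m -> T) (sigma : seq nat)
    (s j : nat) : {set T} :=
  if j < s then [set v i | i : 'I_m & (i : nat) == j]
  else [set v i | i : 'I_m & nth 0 (primes (lambda sigma)) (j - s) %| nth 0 sigma i].

Definition clique (T : finType) (e : rel T) (A : {set T}) : Prop :=
  forall x y, x \in A -> y \in A -> x != y -> e x y.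

Definition total_clique_cover (T : finType) (e : rel T) (F : seq {set T}) : Prop :=
  [/\ (forall A, A \in F -> clique e A),
      (forall x, exists2 A, A \in F & x \in A) &
      (forall x y, e x y -> exists2 A, A \in F & (x \in A) && (y \in A))].

From mathcomp Require Import all_boot zify.
Set Implicit Arguments. Unset Strict Implicit. Unset Printing Implicit Defensive.

(* Two vertices are adjacent iff their labels share a prime, so each class
   S_(s+j) of vertices whose label is divisible by the prime p_j is a clique,
   and these classes cover every edge and every non-isolated vertex; the
   isolated vertices are covered by the singletons S_j, j < s.  Every label is
   square-free, hence equal to the product of the primes dividing it, i.e. of
   the p_j whose class contains the vertex.  This also holds for J empty (both
   sides then say the label is 1). *)

Lemma lambda_gt0 (sigma : seq nat) : 0 < lambda sigma.
Proof. by apply: (big_ind (leq 1)) => // [x y|x]; [rewrite lcmn_gt0 => -> | lia]. Qed.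

Lemma dvdn_lambda (sigma : seq nat) (x : nat) :
  x \in sigma -> 1 < x -> x %| lambda sigma.
Proof. by move=> sx x_gt1; rewrite /lambda (big_rem x) //= x_gt1 dvdn_lcml. Qed.

Lemma primes_sub_lambda (sigma : seq nat) (x : nat) :
  x \in sigma -> {subset primes x <= primes (lambda sigma)}.
Proof.
move=> sx p; rewrite !mem_primes lambda_gt0 => /and3P[p_pr x_gt0 p_dvd].
rewrite p_pr (dvdn_trans p_dvd) // dvdn_lambda //.
by have := dvdn_leq x_gt0 p_dvd; have := prime_gt1 p_pr; lia.
Qed.

Lemma squarefree_prod_primes (n : nat) :
  0 < n -> squarefree n -> n = \prod_(p <- primes n) p.
Proof.
move=> n_gt0 /allP sqf; rewrite {1}(prod_prime_decomp n_gt0) prime_decompE big_map.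
apply: eq_big_seq => p p_n /=.
have : 0 < logn p n by rewrite logn_gt0.
by move: (sqf p p_n); case: (logn p n) => [|[|]].
Qed.

Section PrimeIndexing.

Variable ps : seq nat.
Hypotheses (ps_uniq : uniq ps) (ps_prime : all prime ps).

Lemma prime_nth (j : 'I_(size ps)) : prime (nth 0 ps j).
Proof. exact: (allP ps_prime) (mem_nth 0 (ltn_ord j)). Qed.

Lemma nth_ord_inj : injective (fun j : 'I_(size ps) => nth 0 ps j).
Proof.
move=> j j' eq_jj'; apply: val_inj; apply/eqP.
by rewrite -(nth_uniq 0 (ltn_ord j) (ltn_ord j') ps_uniq) eq_jj'.
Qed.

Lemma dvdn_prod_nth (J : {set 'I_(size ps)}) (j : 'I_(size ps)) :
  (nth 0 ps j %| \prod_(i in J) nth 0 ps i) = (j \in J).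
Proof.
rewrite Euclid_dvd_prod ?prime_nth // big_orE.
apply/existsP/idP => [[i /andP[iJ]] | jJ]; last by exists j; rewrite jJ dvdnn.
by rewrite dvdn_prime2 ?prime_nth // => /eqP/nth_ord_inj ->.
Qed.

Lemma squarefree_eq_prod_nth (n : nat) (J : {set 'I_(size ps)}) :
  0 < n -> squarefree n -> {subset primes n <= ps} ->
  n = \prod_(j in J) nth 0 ps j <-> forall j, (j \in J) = (nth 0 ps j %| n).
Proof.
move=> n_gt0 sqf n_ps; split=> [-> j | dvdJ]; first by rewrite dvdn_prod_nth.
have -> : \prod_(j in J) nth 0 ps j
           = \prod_(p <- [seq nth 0 ps j | j : 'I_(size ps) <- enum J]) p.
  by rewrite big_map big_enum.
rewrite {1}(squarefree_prod_primes n_gt0 sqf).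
apply: perm_big; apply: uniq_perm; first exact: primes_uniq.
  by rewrite map_inj_uniq ?enum_uniq //; apply: nth_ord_inj.
move=> p; apply/idP/mapP => [p_n | [j]]; last first.
  by rewrite mem_enum dvdJ => j_n ->; rewrite mem_primes prime_nth n_gt0.
have [i_lt p_eq] : index p ps < size ps /\ nth 0 ps (index p ps) = p.
  by rewrite index_mem nth_index n_ps.
exists (Ordinal i_lt); last by rewrite /= p_eq.
by rewrite mem_enum dvdJ /= p_eq; move: p_n; rewrite mem_primes => /and3P[].
Qed.

End PrimeIndexing.

Section CodingSequence.

Variables (T : finType) (e : rel T) (m : nat) (v : 'I_m -> T) (sigma : seq nat).
Variable s : nat.
Hypotheses (sigma_coding : coding_seq e v sigma)
           (s_isolated : s = #|[set x | isolated e x]|).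

Local Notation label i := (nth 0 sigma i).
Local Notation ps := (primes (lambda sigma)).
Local Notation S := (Sfam v sigma s).

Lemma coding_inj : injective v.
Proof. by case: sigma_coding => -[_ /bij_inj]. Qed.

Lemma coding_surj (x : T) : exists i, x = v i.
Proof. by case: sigma_coding => -[_ [g _ gK]] *; exists (g x); rewrite gK. Qed.

Lemma coding_edge (i i' : 'I_m) : e (v i) (v i') = graph_of_seq sigma i i'.
Proof. by case: sigma_coding. Qed.

Lemma label_in (i : 'I_m) : label i \in sigma.
Proof. by case: sigma_coding => -[size_sigma _] *; rewrite mem_nth ?size_sigma. Qed.

Lemma label_eq1 (i : 'I_m) : i < s -> label i = 1.
Proof. by case: sigma_coding => _ _ label1 *; apply: label1; rewrite -s_isolated. Qed.

Lemma label_nontrivial (i : 'I_m) : s <= i -> 1 < label i /\ squarefree (label i).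
Proof. by case: sigma_coding => _ _ _ label_sqf _; rewrite s_isolated; apply: label_sqf. Qed.

Lemma label_gt1 (i : 'I_m) : s <= i -> 1 < label i.
Proof. by case/label_nontrivial. Qed.

Lemma label_gt0 (i : 'I_m) : 0 < label i.
Proof. by case: (ltnP i s) => [/label_eq1 -> | /label_gt1 /ltnW]. Qed.

Lemma label_squarefree (i : 'I_m) : squarefree (label i).
Proof. by case: (ltnP i s) => [/label_eq1 -> | /label_nontrivial[]]. Qed.

Lemma mem_Sfam_isolated (i : 'I_m) (j : nat) :
  j < s -> (v i \in S j) = (i == j :> nat).
Proof. by move=> lt_js; rewrite /Sfam lt_js (mem_imset _ _ coding_inj) inE. Qed.

Lemma mem_Sfam_prime (i : 'I_m) (t : nat) :
  (v i \in S (s + t)) = (nth 0 ps t %| label i).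
Proof. by rewrite /Sfam ltnNge leq_addr addKn (mem_imset _ _ coding_inj) inE. Qed.

Lemma Sfam_of_prime (i : 'I_m) (p : nat) : prime p -> p %| label i ->
  exists2 j, j < s + size ps & forall i', (v i' \in S j) = (p %| label i').
Proof.
move=> p_pr p_dvd; have p_ps : p \in ps.
  by apply: (primes_sub_lambda (label_in i)); rewrite mem_primes p_pr label_gt0.
exists (s + index p ps); first by rewrite ltn_add2l index_mem.
by move=> i'; rewrite mem_Sfam_prime nth_index.
Qed.

Lemma Sfam_clique (j : nat) : j < s + size ps -> clique e (S j).
Proof.
move=> lt_j x y; case: (coding_surj x) (coding_surj y) => i -> [i' ->].
have [lt_js | le_sj] := ltnP j s.
  rewrite !mem_Sfam_isolated // => /eqP ij /eqP i'j.
  by rewrite (_ : i = i') ?eqxx //; apply: val_inj; rewrite /= ij i'j.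
rewrite -(subnKC le_sj) !mem_Sfam_prime => p_i p_i' neq_ii'.
have neq_ii : i != i' by apply: contra_neq neq_ii' => ->.
rewrite coding_edge /graph_of_seq neq_ii /=.
have p_pr : prime (nth 0 ps (j - s)).
  by apply: (allP (all_prime_primes (lambda sigma))); rewrite mem_nth ?ltn_subLR.
apply: leq_trans (prime_gt1 p_pr) (dvdn_leq _ _); last by rewrite dvdn_gcd p_i p_i'.
by rewrite gcdn_gt0 label_gt0.
Qed.

Lemma Sfam_cover_vertex (i : 'I_m) : exists2 j, j < s + size ps & v i \in S j.
Proof.
have [lt_is | le_si] := ltnP i s.
  by exists i; [exact: ltn_addr | rewrite mem_Sfam_isolated].
have [j lt_j Sj] := Sfam_of_prime (pdiv_prime (label_gt1 le_si)) (pdiv_dvd (label i)).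
by exists j; rewrite ?Sj ?pdiv_dvd.
Qed.

Lemma Sfam_cover_edge (i i' : 'I_m) :
  e (v i) (v i') -> exists2 j, j < s + size ps & (v i \in S j) && (v i' \in S j).
Proof.
rewrite coding_edge /graph_of_seq => /andP[_ gcd_gt1].
have p_dvd := pdiv_dvd (gcdn (label i) (label i')).
have [j lt_j Sj] := Sfam_of_prime (pdiv_prime gcd_gt1) (dvdn_trans p_dvd (dvdn_gcdl _ _)).
by exists j => //; rewrite !Sj !(dvdn_trans p_dvd) ?dvdn_gcdl ?dvdn_gcdr.
Qed.

Lemma Sfam_pattern (i : 'I_m) (J : {set 'I_(size ps)}) :
  (forall j : 'I_(size ps), j \in J -> v i \in S (s + j)) /\
  (forall j : 'I_(size ps), j \notin J -> v i \notin S (s + j))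
  <-> label i = \prod_(j in J) nth 0 ps j.
Proof.
rewrite squarefree_eq_prod_nth ?primes_uniq ?all_prime_primes ?label_gt0 ?label_squarefree //;
  last exact: primes_sub_lambda (label_in i).
split=> [[inJ notinJ] j | dvdJ]; last by split=> j; rewrite mem_Sfam_prime -dvdJ.
by rewrite -mem_Sfam_prime; case: (boolP (j \in J)) => [/inJ | /notinJ/negbTE] ->.
Qed.

Lemma Sfam_isolatedP (i : 'I_m) : (exists2 j, j < s & v i \in S j) <-> label i = 1.
Proof.
split=> [[j lt_js] | label_i1].
  by rewrite mem_Sfam_isolated // => /eqP ij; apply: label_eq1; rewrite ij.
have lt_is : i < s by rewrite ltnNge; apply/negP => /label_gt1; rewrite label_i1.
by exists i; rewrite ?mem_Sfam_isolated.
Qed.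

End CodingSequence.

Theorem lemma1 (T : finType) (e : rel T) (m : nat) (v : 'I_m -> T)
    (sigma : seq nat) (s : nat) :
  symmetric e -> irreflexive e ->
  coding_seq e v sigma ->
  s = #|[set x | isolated e x]| ->
  let ps := primes (lambda sigma) in
  let k := size ps in
  let S := fun j => Sfam v sigma s j in
  total_clique_cover e [seq S j | j <- iota 0 (s + k)] /\
  (forall (i : 'I_m) (J : {set 'I_k}), J != set0 ->
     ((forall j : 'I_k, j \in J -> v i \in S (s + j)) /\
      (forall j : 'I_k, j \notin J -> v i \notin S (s + j)))
     <-> nth 0 sigma i = \prod_(j in J) nth 0 ps j) /\
  (forall i : 'I_m, (exists2 j, j < s & v i \in S j) <-> nth 0 sigma i = 1).
Proof.
move=> _ _ sigma_coding s_isolated ps k S.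
have in_family j : j < s + k -> S j \in [seq S j | j <- iota 0 (s + k)].
  by move=> lt_j; apply: map_f; rewrite mem_iota.
split; [split | split].
- move=> A /mapP[j]; rewrite mem_iota => /andP[_ lt_j] ->.
  exact: Sfam_clique sigma_coding s_isolated _ lt_j.
- move=> x; have [i ->] := coding_surj sigma_coding x.
  have [j /in_family S_j vi_j] := Sfam_cover_vertex sigma_coding s_isolated i.
  by exists (S j).
- move=> x y; have [i ->] := coding_surj sigma_coding x.
  have [i' ->] := coding_surj sigma_coding y.
  move=> /(Sfam_cover_edge sigma_coding s_isolated)[j /in_family S_j vii'_j].
  by exists (S j).
- by move=> i J _; exact: Sfam_pattern sigma_coding s_isolated i J.
- by move=> i; exact: Sfam_isolatedP sigma_coding s_isolated i.
Qed.
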